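(* Let $r$ be a positive integer and let $x\in\{0,1\}^\omega$ be an $r$-power free Sturmian word. Then for every infinite sequence $V_0,V_1,V_2,\dots$ of words $V_i\in\{0,1\}^+$ there exist $k\ge1$, indices $0\le n_1<n_2<\cdots<n_k$ and a permutation $\sigma$ of $\{1,\dots,k\}$ such that $V_{n_{\sigma(1)}}V_{n_{\sigma(2)}}\cdots V_{n_{\sigma(k)}}\notin\mathrm{Fact}(x)$.
   Context: $\mathrm{Fact}(x)$ is the set of non-empty finite factors $x_ix_{i+1}\cdots x_{i+j}$ ($i,j\ge0$) of $x=x_0x_1\cdots$. A word $x\in\{0,1\}^\omega$ is Sturmian if it is aperiodic (no suffix of $x$ is of the form $u^\omega=uuu\cdots$ with $u$ non-empty) and balanced: for all factors $u,v$ of $x$ with $|u|=|v|$ and each letter $a\in\{0,1\}$, $\big||u|_a-|v|_a\big|\le1$, where $|u|_a$ is the number of occurrences of $a$ in $u$. A word $x$ is $r$-power free if $u^r\notin\mathrm{Fact}(x)$ for every $u\in\mathrm{Fact}(x)$, where $u^r$ denotes $u$ concatenated with itself $r$ times. *)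

From mathcomp Require Import all_boot all_order all_fingroup.
Set Implicit Arguments. Unset Strict Implicit. Unset Printing Implicit Defensive.

(* Infinite words over {0,1} are encoded as nat -> bool (false = 0, true = 1);
   finite words as seq bool. *)
Definition infword := nat -> bool.

Definition subword (x : infword) (i l : nat) : seq bool :=
  [seq x (i + j) | j <- iota 0 l].

Definition is_factor (u : seq bool) (x : infword) : Prop :=
  u <> [::] /\ exists i, u = subword x i (size u).

Definition occ (a : bool) (u : seq bool) : nat := count_mem a u.

Definition aperiodic (x : infword) : Prop :=
  ~ (exists p N, 0 < p /\ forall n, N <= n -> x (n + p) = x n).

Definition balanced (x : infword) : Prop :=
  forall u v, is_factor u x -> is_factor v x -> size u = size v ->
    forall a : bool, (occ a u <= occ a v + 1) /\ (occ a v <= occ a u + 1).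

Definition sturmian (x : infword) : Prop := aperiodic x /\ balanced x.

Definition wpow (u : seq bool) (r : nat) : seq bool := flatten (nseq r u).

Definition power_free (r : nat) (x : infword) : Prop :=
  forall u, is_factor u x -> ~ is_factor (wpow u r) x.

From mathcomp Require Import all_boot all_order all_fingroup.
From Stdlib Require Import Classical.
From mathcomp Require Import zify.

Set Implicit Arguments.
Unset Strict Implicit.
Unset Printing Implicit Defensive.

(* Suppose every concatenation of the V_i with distinct indices, in any order,
   is a factor of x.  If V_0 commutes with V_1, ..., V_N (N = r|V_0|), then
   W = V_1 ... V_N satisfies V_0 W = W V_0, so W has period |V_0| and starts
   with V_0^r.  Otherwise V_0 V_i <> V_i V_0 for some i; the two words have the
   same length, so they end as .. a s and .. (~~a) s.  With C = V_{i+1} and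
   E = V_{i+2} ... V_{i+1+M} (M = r|C|), both s E and s C E are then left
   special.  In a balanced word there is at most one left special factor of
   each length, so s E is a prefix of s C E: E has period |C| and starts with
   C^r.  Either way x contains an r-th power. *)

Lemma size_subword x i l : size (subword x i l) = l.
Proof. by rewrite /subword size_map size_iota. Qed.

Lemma subword_cat x i m n :
  subword x i (m + n) = subword x i m ++ subword x (i + m) n.
Proof.
rewrite /subword iotaD map_cat; congr (_ ++ _).
rewrite add0n -[m]addn0 iotaDl -map_comp addn0; apply: eq_map => j /=.
by rewrite addnA.
Qed.

Lemma is_factor_infix x a u b :
  is_factor (a ++ u ++ b) x -> u <> [::] -> is_factor u x.
Proof.
move=> [_ [i def_aub]] u_nil; split => //; exists (i + size a).
move: def_aub; rewrite !size_cat !subword_cat => /eqP.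
rewrite eqseq_cat ?size_subword // => /andP [_ /eqP /eqP].
by rewrite eqseq_cat ?size_subword // => /andP [/eqP -> _]; rewrite size_subword.
Qed.

Lemma size_wpow u n : size (wpow u n) = n * size u.
Proof. by elim: n => [|n IHn] //=; rewrite size_cat IHn mulSn. Qed.

Lemma take_wpow_of_shift_prefix (C E : seq bool) n :
  take (size E) (C ++ E) = E -> n * size C <= size E -> take (n * size C) E = wpow C n.
Proof.
move=> shiftE; elim: n => [|n IHn] le_nC_E; first by rewrite mul0n take0.
rewrite -{1}shiftE take_takel // take_cat mulSn ltnNge leq_addr /= addKn IHn //.
by rewrite mulSn in le_nC_E; lia.
Qed.

Lemma power_free_no_periodic_factor r x (C P E : seq bool) :
  0 < r -> power_free r x -> is_factor C x ->
  r * size C <= size E -> take (size E) (C ++ E) = E -> ~ is_factor (P ++ E) x.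
Proof.
move=> r_gt0 pf_x fC le_rC_E shiftE fPE; apply: (pf_x C fC).
apply: (@is_factor_infix x P _ (drop (r * size C) E)).
  by rewrite -(take_wpow_of_shift_prefix shiftE le_rC_E) cat_take_drop.
move/(congr1 size); rewrite size_wpow /= => /eqP; rewrite muln_eq0 size_eq0.
by rewrite (negbTE (lt0n_neq0 r_gt0)); apply/negP/eqP; case: fC.
Qed.

Lemma balanced_not_both_0s0_1s1 x s : balanced x ->
  ~ (is_factor (false :: s ++ [:: false]) x /\ is_factor (true :: s ++ [:: true]) x).
Proof.
move=> bal_x [f0 f1].
have size_01 : size (false :: s ++ [:: false]) = size (true :: s ++ [:: true]).
  by rewrite /= !size_cat.
have [_] := bal_x _ _ f0 f1 size_01 true.
by rewrite /occ /= !count_cat /= !addn0; lia.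
Qed.

Definition left_special (x : infword) (w : seq bool) :=
  is_factor (false :: w) x /\ is_factor (true :: w) x.

Lemma left_special_take x n w : left_special x w -> left_special x (take n w).
Proof.
by case=> f0 f1; split; apply: (@is_factor_infix x [::] _ (drop n w));
  rewrite //= cat_take_drop.
Qed.

Lemma first_mismatch (u v : seq bool) : size u = size v -> u <> v ->
  exists p a u' v', u = p ++ a :: u' /\ v = p ++ ~~ a :: v'.
Proof.
elim: u v => [|a u IHu] [|b v] //= [size_uv] neq_uv.
have [eq_ab | neq_ab] := eqVneq a b; last first.
  by exists [::], a, u, v; case: a b neq_ab {neq_uv} => [] [].
have [|p [c [u' [v' [-> ->]]]]] := IHu v size_uv.
  by move=> eq_uv; apply: neq_uv; rewrite eq_ab eq_uv.
by exists (b :: p), c, u', v'; rewrite eq_ab.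
Qed.

Lemma last_mismatch (u v : seq bool) : size u = size v -> u <> v ->
  exists u' v' a s, u = u' ++ a :: s /\ v = v' ++ ~~ a :: s.
Proof.
move=> size_uv neq_uv.
have [||p [a [u' [v' [ru rv]]]]] := @first_mismatch (rev u) (rev v).
- by rewrite !size_rev.
- by move/(congr1 rev); rewrite !revK.
exists (rev u'), (rev v'), a, (rev p).
by rewrite -[u]revK -[v]revK ru rv !rev_cat !rev_cons -!cats1 -!catA.
Qed.

Lemma balanced_left_special_uniq x u v : balanced x -> size u = size v ->
  left_special x u -> left_special x v -> u = v.
Proof.
move=> bal_x size_uv ls_u ls_v; apply/eqP/contraT => /eqP neq_uv.
have [p [a [u' [v' [def_u def_v]]]]] := first_mismatch size_uv neq_uv.
have take_mismatch b w : take (size p).+1 (p ++ b :: w) = p ++ [:: b].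
  by rewrite take_cat ltnNge leqnSn subSnn /= take0.
have [ls_a ls_na] : left_special x (p ++ [:: a]) /\ left_special x (p ++ [:: ~~ a]).
  rewrite -(take_mismatch a u') -(take_mismatch (~~ a) v') -def_u -def_v.
  by split; apply: left_special_take.
case: (@balanced_not_both_0s0_1s1 x p bal_x).
by case: a ls_a ls_na {def_u def_v} => [[_ ?] [? _] | [? _] [_ ?]].
Qed.

Lemma balanced_left_special_prefix x u v : balanced x ->
  left_special x u -> left_special x v -> size u <= size v -> take (size u) v = u.
Proof.
move=> bal_x ls_u ls_v le_uv.
apply: (balanced_left_special_uniq bal_x) => //; first by rewrite size_takel.
exact: left_special_take.
Qed.

Lemma left_special_of_swap x (A B T u' v' s : seq bool) a :
  A ++ B = u' ++ a :: s -> B ++ A = v' ++ ~~ a :: s ->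
  is_factor (A ++ B ++ T) x -> is_factor (B ++ A ++ T) x -> left_special x (s ++ T).
Proof.
move=> def_AB def_BA fABT fBAT.
have fa : is_factor (a :: s ++ T) x.
  by apply: (@is_factor_infix x u' _ [::]) => //; rewrite cats0 -cat_cons catA -def_AB -catA.
have fna : is_factor (~~ a :: s ++ T) x.
  by apply: (@is_factor_infix x v' _ [::]) => //; rewrite cats0 -cat_cons catA -def_BA -catA.
by case: a fa fna {def_AB def_BA} => ? ?; split.
Qed.

Lemma cat_flatten_comm (A : seq bool) (l : seq (seq bool)) :
  (forall B, B \in l -> A ++ B = B ++ A) -> A ++ flatten l = flatten l ++ A.
Proof.
elim: l => [|B l IHl] commA /=; first by rewrite cats0.
have IH : A ++ flatten l = flatten l ++ A.
  by apply: IHl => C lC; apply: commA; rewrite in_cons lC orbT.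
by rewrite catA commA ?mem_head // -!catA IH.
Qed.

Lemma is_factor_flatten_uniq x (V : nat -> seq bool) :
  (forall k (n : 'I_k -> nat) (sigma : 'S_k), 1 <= k ->
     (forall i j : 'I_k, (i < j)%N -> (n i < n j)%N) ->
     is_factor (flatten [seq V (n (sigma i)) | i <- enum 'I_k]) x) ->
  forall p : seq nat, uniq p -> 0 < size p -> is_factor (flatten (map V p)) x.
Proof.
move=> factor_sorted p uniq_p p_gt0.
set k := size p; set s := sort leq p.
have perm_sp : perm_eq s p by rewrite perm_sort.
have size_s : size s = k by rewrite (perm_size perm_sp).
have sorted_s : sorted ltn s.
  by rewrite ltn_sorted_uniq_leq sort_uniq uniq_p sort_sorted //; exact: leq_total.
pose n (i : 'I_k) := nth 0 s i.
have n_incr (i j : 'I_k) : i < j -> n i < n j.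
  by move=> lt_ij; apply: (sorted_ltn_nth ltn_trans) => //; rewrite inE size_s ltn_ord.
have p_in_s (i : 'I_k) : nth 0 p i \in s by rewrite (perm_mem perm_sp) mem_nth.
have rank_lt (i : 'I_k) : index (nth 0 p i) s < k.
  by have := index_mem (nth 0 p i) s; rewrite p_in_s size_s.
(* sigma sends a position of p to the rank of the corresponding index in s *)
pose f (i : 'I_k) : 'I_k := insubd i (index (nth 0 p i) s).
have val_f i : val (f i) = index (nth 0 p i) s by rewrite val_insubd rank_lt.
have f_inj : injective f.
  move=> i j /(congr1 (nth 0 s \o val)) /=; rewrite !val_f !nth_index // => /eqP.
  by rewrite nth_uniq // => /eqP /val_inj.
have := factor_sorted k n (perm f_inj) p_gt0 n_incr.
congr (is_factor (flatten _) x).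
rewrite -[in RHS](mkseq_nth 0 p) /mkseq -val_enum_ord -!map_comp.
by apply: eq_map => i /=; rewrite /n permE val_f nth_index.
Qed.

Section AllArrangementsFactors.

Variables (r : nat) (x : infword) (V : nat -> seq bool).
Hypotheses (r_gt0 : 0 < r) (bal_x : balanced x) (pf_x : power_free r x).
Hypothesis V_neq0 : forall i, V i <> [::].
Hypothesis factor_V :
  forall p : seq nat, uniq p -> 0 < size p -> is_factor (flatten (map V p)) x.

Lemma size_V_gt0 i : 0 < size (V i).
Proof. by rewrite lt0n size_eq0; apply/eqP. Qed.

Lemma size_flatten_V (l : seq nat) : size l <= size (flatten (map V l)).
Proof.
by elim: l => [|i l IHl] //=; rewrite size_cat; have := size_V_gt0 i; lia.
Qed.

Lemma is_factor_V i : is_factor (V i) x.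
Proof. by have := @factor_V [:: i] isT isT; rewrite /= cats0. Qed.

Lemma is_factor_V_cat_iota (p : seq nat) m n : uniq p -> all (ltn^~ m) p -> 0 < size p ->
  is_factor (flatten (map V p) ++ flatten (map V (iota m n))) x.
Proof.
move=> uniq_p p_lt_m p_gt0; rewrite -flatten_cat -map_cat.
apply: factor_V; last by rewrite size_cat; lia.
rewrite cat_uniq uniq_p iota_uniq andbT; apply/hasPn => j; rewrite mem_iota.
by case/andP=> le_mj _; apply: contraL le_mj => /(allP p_lt_m); rewrite -ltnNge.
Qed.

Lemma V0_commutes i : V 0 ++ V i = V i ++ V 0.
Proof.
apply/eqP/contraT => /eqP ncomm; exfalso.
have i_gt0 : 0 < i by rewrite lt0n; apply/eqP => i0; apply: ncomm; rewrite i0.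
set A := V 0 in ncomm *; set B := V i in ncomm *; set C := V i.+1.
pose M := r * size C; pose E := flatten (map V (iota i.+2 M)).
have factor_VE p : uniq p -> all (ltn^~ i.+2) p -> 0 < size p ->
    is_factor (flatten (map V p) ++ E) x by exact: is_factor_V_cat_iota.
have fABE : is_factor (A ++ B ++ E) x.
  by have := factor_VE [:: 0; i]; rewrite /= cats0 -catA inE; apply; lia.
have fBAE : is_factor (B ++ A ++ E) x.
  by have := factor_VE [:: i; 0]; rewrite /= cats0 -catA inE; apply; lia.
have fABCE : is_factor (A ++ B ++ C ++ E) x.
  by have := factor_VE [:: 0; i; i.+1]; rewrite /= cats0 -!catA !inE; apply; lia.
have fBACE : is_factor (B ++ A ++ C ++ E) x.
  by have := factor_VE [:: i; 0; i.+1]; rewrite /= cats0 -!catA !inE; apply; lia.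
have size_ABBA : size (A ++ B) = size (B ++ A) by rewrite !size_cat addnC.
have [u' [v' [a [s [def_AB def_BA]]]]] := last_mismatch size_ABBA ncomm.
have ls_sE := left_special_of_swap def_AB def_BA fABE fBAE.
have ls_sCE := left_special_of_swap def_AB def_BA fABCE fBACE.
have shiftE : take (size E) (C ++ E) = E.
  have : take (size (s ++ E)) (s ++ C ++ E) = s ++ E.
    by apply: (balanced_left_special_prefix bal_x ls_sE ls_sCE); rewrite !size_cat; lia.
  rewrite size_cat take_cat ltnNge leq_addr addKn /= => /eqP.
  by rewrite eqseq_cat // eqxx => /eqP.
have size_E : M <= size E by have := size_flatten_V (iota i.+2 M); rewrite size_iota.
have no_ABE := power_free_no_periodic_factor (P := A ++ B) r_gt0 pf_x
  (is_factor_V i.+1) size_E shiftE.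
by apply: no_ABE; rewrite -catA.
Qed.

Lemma all_arrangements_factors_false : False.
Proof.
set A := V 0; pose N := r * size A; pose W := flatten (map V (iota 1 N)).
have fAW : is_factor (A ++ W) x.
  by have := @is_factor_V_cat_iota [:: 0] 1 N; rewrite /= cats0; apply.
have shiftW : take (size W) (A ++ W) = W.
  by rewrite cat_flatten_comm ?take_size_cat // => B /mapP [i _ ->]; exact: V0_commutes.
have size_W : N <= size W by have := size_flatten_V (iota 1 N); rewrite size_iota.
exact: (power_free_no_periodic_factor r_gt0 pf_x (is_factor_V 0) size_W shiftW fAW).
Qed.

End AllArrangementsFactors.

Theorem lemma2p4 (r : nat) (x : infword) :
  0 < r -> sturmian x -> power_free r x ->
  forall V : nat -> seq bool, (forall i, V i <> [::]) ->
  exists (k : nat) (n : 'I_k -> nat) (sigma : 'S_k),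
    1 <= k /\
    (forall i j : 'I_k, (i < j)%N -> (n i < n j)%N) /\
    ~ is_factor (flatten [seq V (n (sigma i)) | i <- enum 'I_k]) x.
Proof.
move=> r_gt0 [_ bal_x] pf_x V V_neq0; apply: NNPP => no_witness.
apply: (all_arrangements_factors_false r_gt0 bal_x pf_x V_neq0).
apply: is_factor_flatten_uniq => k n sigma k_gt0 n_incr.
by apply: NNPP => not_factor; apply: no_witness; exists k, n, sigma.
Qed.
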